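(* Let $n$ be prime, let $m\ge 1$ and let $d$ be an integer with $2<d\le n$. Let $X$ be the process in which $m$ balls are placed sequentially into $n$ bins, each ball choosing two distinct bins uniformly at random (independently of all other balls) and being placed in the less loaded of the two. Let $Y$ be the corresponding process with $d$ choices generated by double hashing. Then $X$ stochastically majorizes $Y$: there is a coupling of the two processes such that for every $t=0,1,\dots,m$, the sorted load vector $\vec{x}(t)$ of $X$ after $t$ balls majorizes the sorted load vector $\vec{y}(t)$ of $Y$ after $t$ balls. Consequently, for every value $c$, $\Pr(x_1(m)\ge c)\ge \Pr(y_1(m)\ge c)$, where $x_1,y_1$ denote the maximum loads. *)

(* finite probability spaces are handled by explicit counting. *)
From HB Require Import structures.
From mathcomp Require Import all_boot all_order all_algebra.
Set Implicit Arguments. Unset Strict Implicit. Unset Printing Implicit Defensive.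
Import Order.TTheory GRing.Theory Num.Theory.

Definition loads (n : nat) := {ffun 'I_n -> nat}.

Definition valid_tiebreak (n : nat) (tb : loads n -> {set 'I_n} -> 'I_n) : Prop :=
  forall (v : loads n) (S : {set 'I_n}), S != set0 ->
    tb v S \in S /\ (forall j, j \in S -> v (tb v S) <= v j).

Definition place (n : nat) (tb : loads n -> {set 'I_n} -> 'I_n)
  (v : loads n) (S : {set 'I_n}) : loads n :=
  [ffun i => v i + (i == tb v S)].

Definition run (n : nat) (T : Type) (tb : loads n -> {set 'I_n} -> 'I_n)
  (ch : T -> {set 'I_n}) (s : seq T) : loads n :=
  foldl (fun v x => place tb v (ch x)) [ffun => 0%N] s.

(* random choice of one ball in the two-choice process:
   an (ordered) pair of distinct bins, uniformly *)
Definition stepX (n : nat) := {p : 'I_n * 'I_n | p.1 != p.2}.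
Definition choiceX (n : nat) (p : stepX n) : {set 'I_n} :=
  [set (val p).1; (val p).2].

(* random choice of one ball for double hashing: f uniform in [0,n),
   g uniform in [1,n); the d choices are f + k g mod n, k = 0..d-1 *)
Definition stepY (n : nat) := {p : 'I_n * 'I_n | 0 < (val p.2)}.
Definition choiceY (n d : nat) (p : stepY n) : {set 'I_n} :=
  [set i : 'I_n | [exists k : 'I_d,
     val i == ((val (val p).1) + k * (val (val p).2)) %% n]].

Definition loads_at (n m : nat) (T : finType) (tb : loads n -> {set 'I_n} -> 'I_n)
  (ch : T -> {set 'I_n}) (w : {ffun 'I_m -> T}) (t : nat) : loads n :=
  run tb ch (take t (codom w)).

Definition sorted_loads (n : nat) (v : loads n) : seq nat := sort geq (codom v).

Definition max_load (n : nat) (v : loads n) : nat := nth 0 (sorted_loads v) 0.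

(* xs majorizes ys (both sorted non-increasingly) *)
Definition majorizes (xs ys : seq nat) : Prop :=
  sumn xs = sumn ys /\
  forall k : nat, \sum_(i < k) nth 0 ys i <= \sum_(i < k) nth 0 xs i.

From HB Require Import structures.
From mathcomp Require Import all_boot all_order all_algebra.
From mathcomp Require Import fingroup perm zify.
Import Order.TTheory GRing.Theory Num.Theory.
Set Implicit Arguments. Unset Strict Implicit. Unset Printing Implicit Defensive.

(* Load vectors are compared through their excess functions
   excess th v = \sum_i (v_i - th)_+.  A sorted vector x majorizes y as soon as
   both have the same total and excess th y <= excess th x for every threshold th;
   we call this pair of conditions domination.
   The coupling is built step by step: rank the bins of each process by
   decreasing load (ties broken by index) and let [match_bin] send the bin of
   rank r in Y to the bin of rank r in X.  When Y draws the double hash (f, g),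
   whose choice set contains f and f + g mod n, X draws the ordered pair of the
   bins matched with these two positions.  If Y's ball lands at height >= th
   while X's lands below th, then Y had strictly smaller excess over th than X
   before the step (lemma [excess_gap]), so domination survives every step.
   Run ball by ball, this maps every Y-sample injectively to an X-sample; both
   sample spaces have the same size, so the map is a bijection, whose graph is
   the coupling and which also gives the tail inequality for the maximum load. *)

Definition excess (n th : nat) (v : loads n) : nat := \sum_(i < n) (v i - th).

Lemma excess_place n th tb (v : loads n) S :
  excess th (place tb v S) = excess th v + (th <= v (tb v S)).
Proof.
rewrite /excess; set b := tb v S.
rewrite (bigD1 b) //= [in RHS](bigD1 b) //= ffunE eqxx.
rewrite (eq_bigr (fun i => v i - th)); last first.
  by move=> i /negbTE Hi; rewrite ffunE Hi addn0.
by case: (leqP th (v b)) => H /=; lia.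
Qed.

Lemma excess_succ n th (v : loads n) :
  excess th v = excess th.+1 v + #|[set i | th < v i]|.
Proof.
rewrite -sum1_card big_mkcond /excess -big_split /=; apply: eq_bigr => i _.
by rewrite inE; case: (ltnP th (v i)) => H /=; lia.
Qed.

Section Ranking.
Variables (n : nat) (v : loads n).

Definition heavier (j i : 'I_n) : bool :=
  (v i < v j) || ((v j == v i) && (j < i)).

Definition rank (i : 'I_n) : nat := #|[set j | heavier j i]|.

Lemma heavier_irr i : ~~ heavier i i.
Proof. by rewrite /heavier ltnn eqxx ltnn. Qed.

Lemma heavier_load j i : heavier j i -> v i <= v j.
Proof. by case/orP => [/ltnW // | /andP[/eqP -> _]]. Qed.

Lemma heavier_trans i j k : heavier i j -> heavier j k -> heavier i k.
Proof.
rewrite /heavier => /orP[H1|/andP[/eqP H1 H2]] /orP[H3|/andP[/eqP H3 H4]];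
  apply/orP; first [left; lia | right; apply/andP; split; [apply/eqP|]; lia].
Qed.

Lemma heavier_total i j : i != j -> heavier i j || heavier j i.
Proof. by rewrite /heavier; case: (ltngtP (v i) (v j)) => //= _; rewrite -neq_ltn. Qed.

Lemma rank_lt i j : heavier i j -> rank i < rank j.
Proof.
move=> Hij; apply: proper_card; rewrite properE; apply/andP; split.
  by apply/subsetP => k; rewrite !inE => H; apply: heavier_trans H Hij.
by apply/subsetPn; exists i; rewrite !inE // heavier_irr.
Qed.

Lemma rank_inj : injective rank.
Proof.
move=> i j E; apply/eqP; apply/negPn/negP => /heavier_total.
by case/orP => /rank_lt; rewrite E ltnn.
Qed.

Lemma rank_lt_n i : rank i < n.
Proof.
rewrite -[n in _ < n]card_ord -cardsT; apply: proper_card; rewrite properE subsetT.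
by apply/subsetPn; exists i; rewrite !inE // heavier_irr.
Qed.

Definition rank_ord (i : 'I_n) : 'I_n := Ordinal (rank_lt_n i).

Lemma rank_ord_inj : injective rank_ord.
Proof. by move=> i j /(congr1 val) /rank_inj. Qed.

Definition rank_perm : {perm 'I_n} := perm rank_ord_inj.

End Ranking.

Definition match_bin n (vX vY : loads n) (u : 'I_n) : 'I_n :=
  ((rank_perm vX)^-1)%g (rank_perm vY u).

Lemma match_bin_inj n (vX vY : loads n) : injective (match_bin vX vY).
Proof. by move=> a b /perm_inj /perm_inj. Qed.

Lemma rank_match n (vX vY : loads n) u : rank vX (match_bin vX vY u) = rank vY u.
Proof.
by have := permKV (rank_perm vX) (rank_perm vY u); rewrite /match_bin !permE => /(congr1 val).
Qed.

Definition dominates n (vX vY : loads n) : Prop :=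
  excess 0 vY = excess 0 vX /\ forall th, excess th vY <= excess th vX.

(* If a bin of Y at height >= th is matched with a bin of X below th, then Y has
   strictly less excess over th than X: X has at most (rank of w) bins at height
   >= th, while Y has more than that many. *)
Lemma excess_gap n th (vX vY : loads n) w :
  (forall t, excess t vY <= excess t vX) ->
  th <= vY w -> vX (match_bin vX vY w) < th -> excess th vY < excess th vX.
Proof.
case: th => [//|th] dom HY HX.
have fewX : #|[set i | th < vX i]| <= rank vY w.
  rewrite -(rank_match vX); apply: subset_leq_card; apply/subsetP => i.
  by rewrite !inE /heavier => Hi; apply/orP; left; lia.
have manyY : rank vY w < #|[set i | th < vY i]|.
  apply: proper_card; rewrite properE; apply/andP; split.
    apply/subsetP => j; rewrite !inE => /heavier_load; lia.
  by apply/subsetPn; exists w; rewrite !inE ?heavier_irr //.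
by have := dom th; rewrite !(excess_succ th) => H; lia.
Qed.

Definition first_hash n (y : stepY n) : 'I_n := (val y).1.

Lemma stepY_pos n (y : stepY n) : 0 < n.
Proof. exact: leq_ltn_trans (leq0n _) (ltn_ord (val y).1). Qed.

Definition second_hash n (y : stepY n) : 'I_n :=
  Ordinal (ltn_pmod (val (val y).1 + val (val y).2) (stepY_pos y)).

Lemma hashes_neq n (y : stepY n) : first_hash y != second_hash y.
Proof.
case: y => [[f g] /= Hg]; rewrite /first_hash; apply/eqP => /(congr1 val) /=.
have := ltn_ord f; have := ltn_ord g; case: (ltnP (f + g) n) => H Hgn Hfn.
  by rewrite modn_small //; lia.
by rewrite -(subnK H) modnDr modn_small; lia.
Qed.

Lemma first_hash_in n d (y : stepY n) : 0 < d -> first_hash y \in choiceY d y.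
Proof.
move=> Hd; rewrite inE; apply/existsP; exists (Ordinal Hd) => /=.
by rewrite mul0n addn0 modn_small.
Qed.

Lemma second_hash_in n d (y : stepY n) : 1 < d -> second_hash y \in choiceY d y.
Proof. by move=> Hd; rewrite inE; apply/existsP; exists (Ordinal Hd); rewrite /= mul1n. Qed.

Lemma matched_hashes_neq n (vX vY : loads n) (y : stepY n) :
  match_bin vX vY (first_hash y) != match_bin vX vY (second_hash y).
Proof. by rewrite (inj_eq (@match_bin_inj n vX vY)) hashes_neq. Qed.

Definition couple_step n (vX vY : loads n) (y : stepY n) : stepX n :=
  exist _ (match_bin vX vY (first_hash y), match_bin vX vY (second_hash y))
          (matched_hashes_neq vX vY y).

Lemma couple_step_inj n (vX vY : loads n) : injective (couple_step vX vY).
Proof.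
move=> [[f g] Hg] [[f' g'] Hg'] /(congr1 val) [/match_bin_inj Ef /match_bin_inj].
rewrite /first_hash /= in Ef; subst f' => /(congr1 val) /eqP /=.
rewrite eqn_modDl !modn_small // => /eqP Eg.
by apply: val_inj; congr pair; apply: val_inj.
Qed.

Lemma dominates_place n d tbX tbY (vX vY : loads n) (y : stepY n) : 1 < d ->
  valid_tiebreak tbX -> valid_tiebreak tbY -> dominates vX vY ->
  dominates (place tbX vX (choiceX (couple_step vX vY y)))
            (place tbY vY (choiceY d y)).
Proof.
move=> Hd VX VY [H0 Hth].
set SX := choiceX _; set SY := choiceY d y.
have f_in : first_hash y \in SY by apply: first_hash_in; apply: ltnW.
have g_in : second_hash y \in SY by apply: second_hash_in.
have nSY : SY != set0 by apply/set0Pn; exists (first_hash y).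
have nSX : SX != set0 by apply/set0Pn; exists (match_bin vX vY (first_hash y)); rewrite !inE eqxx.
have [_ minY] := VY vY SY nSY; have [inX _] := VX vX SX nSX.
split; first by rewrite !excess_place H0.
move=> th; rewrite !excess_place.
case: (leqP th (vY (tbY vY SY))) => HY; last first.
  by rewrite addn0; apply: leq_trans (Hth th) (leq_addr _ _).
case: (leqP th (vX (tbX vX SX))) => HX; first by rewrite leq_add2r.
rewrite addn0 addn1; move: inX HX; rewrite !inE /= => /orP[] /eqP -> HX.
  exact: excess_gap Hth (leq_trans HY (minY _ f_in)) HX.
exact: excess_gap Hth (leq_trans HY (minY _ g_in)) HX.
Qed.

Fixpoint couple_seq n d tbX tbY (vX vY : loads n) (ys : seq (stepY n)) : seq (stepX n) :=
  if ys is y :: ys' then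
    let x := couple_step vX vY y in
    x :: couple_seq d tbX tbY (place tbX vX (choiceX x)) (place tbY vY (choiceY d y)) ys'
  else [::].

Lemma size_couple_seq n d tbX tbY (vX vY : loads n) ys :
  size (couple_seq d tbX tbY vX vY ys) = size ys.
Proof. by elim: ys vX vY => //= y ys IH vX vY; rewrite IH. Qed.

Lemma couple_seq_dominates n d tbX tbY (ys : seq (stepY n)) : 1 < d ->
  valid_tiebreak tbX -> valid_tiebreak tbY -> forall vX vY, dominates vX vY ->
  forall t, dominates
    (foldl (fun v x => place tbX v (@choiceX n x)) vX (take t (couple_seq d tbX tbY vX vY ys)))
    (foldl (fun v y => place tbY v (choiceY d y)) vY (take t ys)).
Proof.
move=> Hd VX VY; elim: ys => [|y ys IH] vX vY dom [|t] //=.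
by apply: IH; apply: dominates_place.
Qed.

Lemma couple_seq_inj n d tbX tbY (vX vY : loads n) (ys ys' : seq (stepY n)) :
  size ys = size ys' ->
  couple_seq d tbX tbY vX vY ys = couple_seq d tbX tbY vX vY ys' -> ys = ys'.
Proof.
elim: ys ys' vX vY => [|y ys IH] [|y' ys'] vX vY //= [Hs] E.
have /couple_step_inj Ey := congr1 (head (couple_step vX vY y)) E.
by subst y'; case: E => /IH ->.
Qed.

Definition excess_seq (th : nat) (s : seq nat) : nat := sumn [seq a - th | a <- s].

Lemma excess_seq_cons th a s : excess_seq th (a :: s) = (a - th) + excess_seq th s.
Proof. by []. Qed.

Lemma prefix_sum_le (s : seq nat) k th :
  \sum_(i < k) nth 0 s i <= k * th + excess_seq th s.
Proof.
elim: s k => [|a s IH] [|k]; rewrite ?big_ord0 //.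
  by rewrite big1 // => i _; rewrite nth_nil.
rewrite big_ord_recl mulSn excess_seq_cons /=.
by have := IH k; set A := \sum_(i < k) _; lia.
Qed.

Lemma excess_seq_above (s : seq nat) a : all (fun b => b <= a) s -> excess_seq a s = 0.
Proof. by elim: s => //= b s IH /andP[Hb Hs]; rewrite excess_seq_cons IH //; lia. Qed.

Lemma prefix_sum_sorted (s : seq nat) k : sorted geq s ->
  k.+1 * nth 0 s k + excess_seq (nth 0 s k) s <= \sum_(i < k.+1) nth 0 s i.
Proof.
elim: s k => [|a s IH] k; first by rewrite nth_nil muln0.
move=> Hp; rewrite big_ord_recl /=.
have Hall : all (fun b => b <= a) s.
  by apply: (order_path_min _ Hp) => p q r /= H1 H2; apply: leq_trans H2 H1.
case: k => [|k] /=.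
  by rewrite big_ord0 excess_seq_cons excess_seq_above // subnn; lia.
set th := nth 0 s k.
have Hth : th <= a.
  rewrite /th; case: (ltnP k (size s)) => Hk; last by rewrite nth_default.
  by move/allP: Hall; apply; apply: mem_nth.
have := IH k (path_sorted Hp); rewrite excess_seq_cons -/th !mulSn.
by set A := \sum_(i < k.+1) _; lia.
Qed.

Lemma excess_sorted_loads n (v : loads n) th : excess_seq th (sorted_loads v) = excess th v.
Proof.
rewrite /excess_seq sumnE big_map /sorted_loads (perm_big (codom v)) ?perm_sort //.
by rewrite codomE big_map big_enum.
Qed.

(* Domination of load vectors implies majorization of their sorted versions:
   with th the (k+1)-th largest load of X, the k+1 largest loads of Y sum to at
   most (k+1) th + excess th vY <= (k+1) th + excess th vX, which is the sum of
   the k+1 largest loads of X. *)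
Lemma dominates_majorizes n (vX vY : loads n) :
  dominates vX vY -> majorizes (sorted_loads vX) (sorted_loads vY).
Proof.
move=> [H0 Hth]; split.
  have total : forall v : loads n, sumn (sorted_loads v) = excess 0 v.
    by move=> v; rewrite -excess_sorted_loads /excess_seq (eq_map (subn0)) map_id.
  by rewrite !total H0.
case=> [|k]; first by rewrite !big_ord0.
have sortedX : sorted geq (sorted_loads vX) by apply: sort_sorted => a b; exact: leq_total.
apply: leq_trans (prefix_sum_le _ k.+1 (nth 0 (sorted_loads vX) k)) _.
apply: leq_trans (prefix_sum_sorted k sortedX).
by rewrite leq_add2l !excess_sorted_loads.
Qed.

Lemma majorizes_max (xs ys : seq nat) : majorizes xs ys -> nth 0 ys 0 <= nth 0 xs 0.
Proof. by move=> [_ /(_ 1)]; rewrite !big_ord1. Qed.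

(* Both step spaces have n (n - 1) elements, which we show with an injection in
   each direction: a pair (a, b) of distinct bins gives the double hash
   (f, g) = (a, b - a mod n), and any coupled step is an injection back. *)
Definition bin_gap n (a b : 'I_n) : nat := if a <= b then b - a else b + n - a.

Lemma bin_gap_lt n (a b : 'I_n) : bin_gap a b < n.
Proof. by rewrite /bin_gap; have := ltn_ord a; have := ltn_ord b; case: (leqP a b); lia. Qed.

Lemma bin_gap_pos n (x : stepX n) : 0 < bin_gap (val x).1 (val x).2.
Proof.
case: x => [[a b] /= /eqP Hab]; have {}Hab : nat_of_ord a <> b by move=> /val_inj.
by rewrite /bin_gap; have := ltn_ord a; have := ltn_ord b; case: (leqP a b); lia.
Qed.

Definition stepX_to_stepY n (x : stepX n) : stepY n :=
  exist (fun p : 'I_n * 'I_n => 0 < p.2)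
    ((val x).1, Ordinal (bin_gap_lt (val x).1 (val x).2)) (bin_gap_pos x).

Lemma stepX_to_stepY_inj n : injective (@stepX_to_stepY n).
Proof.
move=> [[a b] Hab] [[a' b'] Hab'] /(congr1 val) /= [Ea]; subst a'.
rewrite /bin_gap => Eg; apply: val_inj; congr pair; apply: val_inj => /=.
by move: Eg; have := ltn_ord a; have := ltn_ord b; have := ltn_ord b';
  case: (leqP a b); case: (leqP a b'); lia.
Qed.

Lemma card_stepX n : #|{: stepX n}| = #|{: stepY n}|.
Proof.
apply/eqP; rewrite eqn_leq; apply/andP; split; first exact: leq_card (@stepX_to_stepY_inj n).
exact: leq_card (@couple_step_inj n [ffun => 0] [ffun => 0]).
Qed.

Lemma codom_ffun_nth m T (x0 : T) (s : seq T) :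
  size s = m -> codom [ffun t : 'I_m => nth x0 s t] = s.
Proof.
move=> Hs; rewrite codomE (eq_map (g := nth x0 s \o val)) => [|t]; last by rewrite ffunE.
by rewrite map_comp val_enum_ord -Hs; exact: mkseq_nth.
Qed.

Lemma codom_ffun_inj (aT : finType) T : injective (fun f : {ffun aT -> T} => codom f).
Proof. by move=> f g /=; rewrite !codom_ffun => /val_inj /(can_inj fgraphK). Qed.

(* The coupling of whole samples of m balls, from the empty bins; x0 is only a
   default value for [nth], never reached since the coupled run has length m. *)
Definition couple_sample n m d tbX tbY (x0 : stepX n) (wy : {ffun 'I_m -> stepY n})
  : {ffun 'I_m -> stepX n} :=
  [ffun t : 'I_m => nth x0 (couple_seq d tbX tbY [ffun => 0] [ffun => 0] (codom wy)) t].

Lemma codom_couple_sample n m d tbX tbY x0 (wy : {ffun 'I_m -> stepY n}) :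
  codom (couple_sample d tbX tbY x0 wy)
  = couple_seq d tbX tbY [ffun => 0] [ffun => 0] (codom wy).
Proof. by apply: codom_ffun_nth; rewrite size_couple_seq size_codom card_ord. Qed.

Lemma couple_sample_inj n m d tbX tbY x0 :
  injective (@couple_sample n m d tbX tbY x0).
Proof.
move=> w1 w2 E; have := congr1 (fun f : {ffun 'I_m -> stepX n} => codom f) E.
rewrite /= !codom_couple_sample.
by move/couple_seq_inj; rewrite !size_codom => /(_ erefl) /codom_ffun_inj.
Qed.

Lemma couple_sample_majorizes n m d tbX tbY x0 (wy : {ffun 'I_m -> stepY n}) t :
  1 < d -> valid_tiebreak tbX -> valid_tiebreak tbY ->
  majorizes (sorted_loads (loads_at tbX (@choiceX n) (couple_sample d tbX tbY x0 wy) t))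
            (sorted_loads (loads_at tbY (choiceY d) wy t)).
Proof.
move=> Hd VX VY; rewrite /loads_at /run codom_couple_sample.
by apply/dominates_majorizes/couple_seq_dominates.
Qed.

Local Open Scope ring_scope.

Lemma bijection_coupling (R : numFieldType) (A B : finType) (phi : B -> A) :
  injective phi -> #|A| = #|B| ->
  exists mu : {ffun A * B -> R},
    [/\ forall w, 0 <= mu w,
        forall a, \sum_b mu (a, b) = 1 / #|A|%:R,
        forall b, \sum_a mu (a, b) = 1 / #|B|%:R
      & forall a b, mu (a, b) != 0 -> a = phi b].
Proof.
move=> phi_inj cardAB.
have phi_onto a : exists b, phi b = a.
  have /codomP [b ->] := inj_card_onto phi_inj (eq_leq cardAB) a; by exists b.
exists [ffun w => if w.1 == phi w.2 then 1 / #|B|%:R else 0]; split.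
- by move=> w; rewrite ffunE; case: ifP => _ //; rewrite divr_ge0 ?ler0n.
- move=> a; have [b0 <-] := phi_onto a.
  rewrite (bigD1 b0) //= ffunE /= eqxx big1 ?addr0 ?cardAB // => b Hb.
  by rewrite ffunE (inj_eq phi_inj) eq_sym (negbTE Hb).
- move=> b; rewrite (bigD1 (phi b)) //= ffunE eqxx big1 ?addr0 // => a Ha.
  by rewrite ffunE /= (negbTE Ha).
- by move=> a b; rewrite ffunE /=; case: (a =P phi b) => // _; rewrite eqxx.
Qed.

Lemma bijection_prob_le (R : numFieldType) (A B : finType) (phi : B -> A)
    (P : pred B) (Q : pred A) :
  injective phi -> #|A| = #|B| -> (forall b, P b -> Q (phi b)) ->
  #|[set b | P b]|%:R / #|B|%:R <= #|[set a | Q a]|%:R / #|A|%:R :> R.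
Proof.
move=> phi_inj cardAB PQ; rewrite cardAB ler_wpM2r ?invr_ge0 ?ler0n // ler_nat.
rewrite -(card_imset _ phi_inj); apply: subset_leq_card; apply/subsetP => a.
by case/imsetP => b; rewrite !inE => /PQ Qb ->.
Qed.

Definition some_stepX n (n_gt1 : (1 < n)%N) : stepX n :=
  exist _ (Ordinal (ltnW n_gt1), Ordinal n_gt1) isT.

Theorem mainTheorem1 (R : realFieldType) (n m d : nat)
  (tbX tbY : loads n -> {set 'I_n} -> 'I_n) :
  prime n -> (1 <= m)%N -> (2 < d)%N -> (d <= n)%N ->
  valid_tiebreak tbX -> valid_tiebreak tbY ->
  (exists mu : {ffun {ffun 'I_m -> stepX n} * {ffun 'I_m -> stepY n} -> R},
     (forall w, 0 <= mu w) /\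
     (forall wx, \sum_(wy : {ffun 'I_m -> stepY n}) mu (wx, wy)
                 = 1 / #|{ffun 'I_m -> stepX n}|%:R) /\
     (forall wy, \sum_(wx : {ffun 'I_m -> stepX n}) mu (wx, wy)
                 = 1 / #|{ffun 'I_m -> stepY n}|%:R) /\
     (forall wx wy, mu (wx, wy) != 0 ->
        forall t : nat, (t <= m)%N ->
          majorizes (sorted_loads (loads_at tbX (@choiceX n) wx t))
                    (sorted_loads (loads_at tbY (@choiceY n d) wy t))))
  /\
  (forall c : nat,
     (#|[set wy : {ffun 'I_m -> stepY n}
         | (c <= max_load (loads_at tbY (@choiceY n d) wy m))%N]|%:R
       / #|{ffun 'I_m -> stepY n}|%:R : R)
     <= #|[set wx : {ffun 'I_m -> stepX n}
         | (c <= max_load (loads_at tbX (@choiceX n) wx m))%N]|%:R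
       / #|{ffun 'I_m -> stepX n}|%:R).
Proof.
move=> n_prime _ d_gt2 _ VX VY.
pose x0 := some_stepX (prime_gt1 n_prime).
pose phi := couple_sample d tbX tbY x0 (m := m).
have phi_inj : injective phi := @couple_sample_inj _ _ _ _ _ _.
have cardAB : #|{ffun 'I_m -> stepX n}| = #|{ffun 'I_m -> stepY n}|.
  by rewrite !card_ffun card_stepX.
have maj (wy : {ffun 'I_m -> stepY n}) t :=
  couple_sample_majorizes x0 wy t (ltnW d_gt2) VX VY.
split.
  have [mu [mu_ge0 margX margY supp]] := bijection_coupling R phi_inj cardAB.
  exists mu; do 3!split => //.
  by move=> wx wy /supp -> t _; apply: maj.
move=> c; apply: bijection_prob_le phi_inj cardAB _ => wy.
by move=> /= Hc; apply: leq_trans Hc (majorizes_max (maj wy m)).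
Qed.
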